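(* Let $\mathbf{x}_1,\dots,\mathbf{x}_n\in\mathbb{R}^d$, $y_1,\dots,y_n\in\mathbb{R}$ and $\mathbf{v}\in\mathbb{R}^k$ be arbitrary. Any $\widetilde{\mathbf{W}}\in\mathbb{R}^{k\times d}$ satisfying $$\frac1n\sum_{i=1}^n\big(\mathbf{x}_i^T\widetilde{\mathbf{W}}^T\mathrm{diag}(\mathbf{v})\widetilde{\mathbf{W}}\mathbf{x}_i-y_i\big)\mathbf{x}_i\mathbf{x}_i^T=\mathbf{0}$$ is a global minimizer over $\mathbf{W}\in\mathbb{R}^{k\times d}$ of $\mathcal{L}(\mathbf{W})=\frac1{2n}\sum_{i=1}^n\big(\mathbf{x}_i^T\mathbf{W}^T\mathrm{diag}(\mathbf{v})\mathbf{W}\mathbf{x}_i-y_i\big)^2$. *)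

(* the statement is purely algebraic, stated over an
   arbitrary real field R (covers the reals). *)
From HB Require Import structures.
From mathcomp Require Import all_boot all_order all_algebra.
Set Implicit Arguments. Unset Strict Implicit. Unset Printing Implicit Defensive.
Import Order.TTheory GRing.Theory Num.Theory.
Local Open Scope ring_scope.

Definition quadW (R : pzRingType) (k d : nat) (W : 'M[R]_(k, d)) (v : 'rV[R]_k)
  (x : 'cV[R]_d) : R :=
  (x^T *m W^T *m diag_mx v *m W *m x) 0 0.

Definition lossL (R : fieldType) (n d k : nat) (x : 'I_n -> 'cV[R]_d)
  (y : 'I_n -> R) (v : 'rV[R]_k) (W : 'M[R]_(k, d)) : R :=
  (2 * n%:R)^-1 * \sum_(i < n) (quadW W v (x i) - y i) ^+ 2.

Definition gradM (R : fieldType) (n d k : nat) (x : 'I_n -> 'cV[R]_d)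
  (y : 'I_n -> R) (v : 'rV[R]_k) (W : 'M[R]_(k, d)) : 'M[R]_d :=
  (n%:R)^-1 *: \sum_(i < n) ((quadW W v (x i) - y i) *: (x i *m (x i)^T)).

(* The quadratic form x^T W^T diag(v) W x equals tr (M_W * x x^T) with
   M_W := W^T diag(v) W, so each prediction is a linear function of M_W.  The
   hypothesis says that the residuals r_i of Wt are orthogonal, with weights
   x_i x_i^T, to every matrix; taking the matrix M_W - M_Wt shows that the
   residuals are orthogonal to the prediction changes t_i.  Hence
   sum (r_i + t_i)^2 = sum r_i^2 + sum t_i^2 >= sum r_i^2. *)
From HB Require Import structures.
From mathcomp Require Import all_boot all_order all_algebra.
Import Order.TTheory GRing.Theory Num.Theory.
Set Implicit Arguments. Unset Strict Implicit. Unset Printing Implicit Defensive.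
Local Open Scope ring_scope.

Lemma sumr_sqr_le_sqrD (R : realDomainType) (I : Type) (s : seq I)
    (r t : I -> R) :
  \sum_(i <- s) r i * t i = 0 ->
  \sum_(i <- s) r i ^+ 2 <= \sum_(i <- s) (r i + t i) ^+ 2.
Proof.
move=> rt0.
under [X in _ <= X]eq_bigr do rewrite sqrrD -addrA.
rewrite big_split /= lerDl big_split /= sumrMnl rt0 mul0rn add0r.
by apply: sumr_ge0 => i _; apply: sqr_ge0.
Qed.

Lemma quadW_mxtrace (R : comPzRingType) (k d : nat) (W : 'M[R]_(k, d))
    (v : 'rV[R]_k) (z : 'cV[R]_d) :
  quadW W v z = \tr (W^T *m diag_mx v *m W *m (z *m z^T)).
Proof.
by rewrite /quadW mulmxA mxtrace_mulC !mulmxA /mxtrace big_ord1.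
Qed.

Lemma gradM_eq0_mxtrace (R : numFieldType) (n d k : nat)
    (x : 'I_n -> 'cV[R]_d) (y : 'I_n -> R) (v : 'rV[R]_k)
    (W : 'M[R]_(k, d)) (A : 'M[R]_d) :
  gradM x y v W = 0 ->
  \sum_(i < n) (quadW W v (x i) - y i) * \tr (A *m (x i *m (x i)^T)) = 0.
Proof.
move=> grad0.
have sum0 : \sum_(i < n) ((quadW W v (x i) - y i) *: (x i *m (x i)^T)) = 0.
  case: n x y grad0 => [|n] x y; first by rewrite big_ord0.
  by move/eqP; rewrite scaler_eq0 invr_eq0 pnatr_eq0 /= => /eqP.
under eq_bigr do rewrite -mxtraceZ scalemxAr.
by rewrite -raddf_sum /= -mulmx_sumr sum0 mulmx0 mxtrace0.
Qed.

Theorem lemma6p1 (R : realFieldType) (n d k : nat)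
  (x : 'I_n -> 'cV[R]_d) (y : 'I_n -> R) (v : 'rV[R]_k)
  (Wt : 'M[R]_(k, d)) :
  gradM x y v Wt = 0 ->
  forall W : 'M[R]_(k, d), lossL x y v Wt <= lossL x y v W.
Proof.
move=> grad0 W.
pose M (W : 'M[R]_(k, d)) := W^T *m diag_mx v *m W.
pose r i := quadW Wt v (x i) - y i.
pose t i := quadW W v (x i) - quadW Wt v (x i).
have residual_orth : \sum_(i < n) r i * t i = 0.
  rewrite -[RHS](gradM_eq0_mxtrace (M W - M Wt) grad0).
  by apply: eq_bigr => i _; rewrite mulmxBl raddfB /= -!quadW_mxtrace.
rewrite /lossL; apply: ler_wpM2l; first by rewrite invr_ge0 mulr_ge0 ?ler0n.
have splitW i : quadW W v (x i) - y i = r i + t i.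
  by rewrite /r /t [RHS]addrC addrA subrK.
under [X in _ <= X]eq_bigr do rewrite splitW.
exact: sumr_sqr_le_sqrD.
Qed.
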